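(* Let $H$ be a group and $A$ an abelian group. Associating to a central extension $1 \to A \to G \to H \to 1$ its extension cocycle class in $\mathrm{H}^2(H, A)$ yields a bijection between (i) isomorphism classes of groups $G$ with $\mathcal{Z}(G) \cong A$ and $G/\mathcal{Z}(G) \cong H$, and (ii) $\mathrm{Aut}(H) \times \mathrm{Aut}(A)$-orbits of classes of centrally non-degenerate cocycles in $\mathrm{H}^2(H, A)$.
   Context: Given a central extension $1\to A\to G\to H\to 1$ and a section $s: H \to G$, the extension cocycle is $\sigma(h_1,h_2) = s(h_1h_2)^{-1}s(h_1)s(h_2) \in A$; its class in $\mathrm{H}^2(H,A)$ (trivial action) is independent of $s$. The group $\mathrm{Aut}(H)\times\mathrm{Aut}(A)$ acts on $\mathrm{H}^2(H,A)$ via $\rho \mapsto \psi_A \circ \rho \circ (\psi_H \times \psi_H)$ for $\psi_H\in\mathrm{Aut}(H)$, $\psi_A\in\mathrm{Aut}(A)$, $\rho \in \mathrm{Z}^2(H,A)$. A 2-cocycle $\sigma \in \mathrm{Z}^2(H,A)$ is called centrally non-degenerate if for every non-trivial $g \in \mathcal{Z}(H)$ there is $h \in H$ with $\sigma(g,h) \neq \sigma(h,g)$. *)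

(* abstract (possibly infinite) groups are mathcomp's
   [groupType] (boot/monoid.v); the abelian group A is a [zmodType]
   (written additively). *)
From HB Require Import structures.
From mathcomp Require Import all_boot ssralg.

Set Implicit Arguments.
Unset Strict Implicit.
Unset Printing Implicit Defensive.

Local Open Scope group_scope.

Definition grp_hom (G1 G2 : groupType) (f : G1 -> G2) : Prop :=
  {morph f : x y / x * y}.

Definition grp_isomorphic (G1 G2 : groupType) : Prop :=
  exists f : G1 -> G2, grp_hom f /\ bijective f.

Definition grp_aut (H : groupType) (psi : H -> H) : Prop :=
  grp_hom psi /\ bijective psi.

Definition zmod_aut (A : zmodType) (psi : A -> A) : Prop :=
  {morph psi : a b / (a + b)%R} /\ bijective psi.

Definition in_center (G : groupType) (g : G) : Prop :=
  forall x : G, g * x = x * g.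

(* [center_data iota pi] : the central extension 1 -> A -iota-> G -pi-> H -> 1
   in which iota identifies A with Z(G) and pi identifies G/Z(G) with H
   (iota is an injective hom with image exactly Z(G); pi is a surjective hom
   with kernel exactly Z(G), i.e. it induces G/Z(G) ~= H). *)
Definition center_data (H : groupType) (A : zmodType) (G : groupType)
    (iota : A -> G) (pi : G -> H) : Prop :=
  [/\ {morph iota : a b / (a + b)%R >-> a * b},
      injective iota &
      (forall g : G, in_center g <-> exists a, iota a = g)] /\
  [/\ grp_hom pi,
      (forall h : H, exists g, pi g = h) &
      (forall g : G, pi g = 1 <-> in_center g)].

Definition ext_cocycle (H : groupType) (A : zmodType) (G : groupType)
    (iota : A -> G) (pi : G -> H) (sigma : H -> H -> A) : Prop :=
  exists s : H -> G, (forall h, pi (s h) = h) /\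
    forall h1 h2 : H, iota (sigma h1 h2) = (s (h1 * h2))^-1 * (s h1 * s h2).

Definition cocycle2 (H : groupType) (A : zmodType) (sigma : H -> H -> A) : Prop :=
  forall h1 h2 h3 : H,
    (sigma h1 h2 + sigma (h1 * h2)%g h3 = sigma h2 h3 + sigma h1 (h2 * h3)%g)%R.

(* equality of classes in H^2(H, A): difference is a coboundary *)
Definition cohomologous (H : groupType) (A : zmodType) (sigma tau : H -> H -> A) : Prop :=
  exists f : H -> A, forall h1 h2 : H,
    tau h1 h2 = (sigma h1 h2 + (f h1 + f h2 - f (h1 * h2)%g))%R.

Definition aut_act (H : groupType) (A : zmodType) (psiH : H -> H) (psiA : A -> A)
    (rho : H -> H -> A) : H -> H -> A :=
  fun h1 h2 => psiA (rho (psiH h1) (psiH h2)).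

Definition same_orbit (H : groupType) (A : zmodType) (sigma tau : H -> H -> A) : Prop :=
  exists (psiH : H -> H) (psiA : A -> A),
    [/\ grp_aut psiH, zmod_aut psiA & cohomologous (aut_act psiH psiA sigma) tau].

Definition centrally_nondegenerate (H : groupType) (A : zmodType)
    (sigma : H -> H -> A) : Prop :=
  forall g : H, in_center g -> g <> 1 -> exists h : H, sigma g h <> sigma h g.

(* Fix a section s of pi.  Every element of G is uniquely s(h) iota(a), and in
   these coordinates (h, a) (k, b) = (hk, sigma(h,k) + a + b).  Associativity of
   this law is the cocycle identity, and since iota(A) is the whole centre, a
   central h <> 1 of H with sigma(h,-) = sigma(-,h) would make s(h) central: this
   is central non-degeneracy.  Conversely the same law turns every cocycle into a
   group, whose centre is iota(A) when sigma is centrally non-degenerate.  Another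
   section changes sigma by a coboundary.  An isomorphism G1 ~= G2 maps centre
   onto centre, hence induces automorphisms of A and of H and carries a section of
   G1 to a section of G2 with the transformed cocycle; conversely, automorphisms
   matching the two cocycles match the coordinates of G1 and G2. *)

From HB Require Import structures.
From mathcomp Require Import all_boot ssralg ssrAC.
From Stdlib Require Import ClassicalEpsilon.

Set Implicit Arguments.
Unset Strict Implicit.
Unset Printing Implicit Defensive.
Import GRing.Theory.
Local Open Scope group_scope.

Section Homomorphisms.
Variables G1 G2 : groupType.
Implicit Types f : G1 -> G2.

Lemma grp_hom1 f : grp_hom f -> f 1 = 1.
Proof. by move=> fM; apply: (mulgI (f 1)); rewrite -fM !mulg1. Qed.

Lemma grp_homV f : grp_hom f -> {morph f : x / x^-1}.
Proof. by move=> fM x; apply: (mulgI (f x)); rewrite -fM !mulgV grp_hom1. Qed.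

Lemma grp_hom_can f (f' : G2 -> G1) : grp_hom f -> cancel f f' -> cancel f' f -> grp_hom f'.
Proof. by move=> fM fK f'K x y; apply: (can_inj fK); rewrite fM !f'K. Qed.

Lemma grp_hom_center f (f' : G2 -> G1) x :
  grp_hom f -> cancel f' f -> in_center x -> in_center (f x).
Proof. by move=> fM f'K xZ y; rewrite -(f'K y) -!fM xZ. Qed.

End Homomorphisms.

Lemma cohomologous_sym (H : groupType) (A : zmodType) (sigma tau : H -> H -> A) :
  cohomologous sigma tau -> cohomologous tau sigma.
Proof.
case=> f tauE; exists (fun h => - f h)%R => h1 h2.
by rewrite tauE -!opprD addrK.
Qed.

Section CentralExtension.
Variables (H : groupType) (A : zmodType) (G : groupType) (iota : A -> G) (pi : G -> H).
Hypothesis ext : center_data iota pi.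

Lemma iotaD : {morph iota : a b / (a + b)%R >-> a * b}.
Proof. by case: ext => -[]. Qed.

Lemma iota_inj : injective iota.
Proof. by case: ext => -[]. Qed.

Lemma in_center_iotaP g : in_center g <-> exists a, iota a = g.
Proof. by case: ext => -[]. Qed.

Lemma pi_hom : grp_hom pi.
Proof. by case: ext => _ []. Qed.

Lemma pi_surj h : exists g, pi g = h.
Proof. by case: ext => _ []. Qed.

Lemma pi_eq1 g : pi g = 1 <-> in_center g.
Proof. by case: ext => _ []. Qed.

Lemma iota_central a : in_center (iota a).
Proof. by apply/in_center_iotaP; exists a. Qed.

Lemma pi_iota a : pi (iota a) = 1.
Proof. exact/pi_eq1/iota_central. Qed.

Lemma iota0 : iota 0%R = 1.
Proof. by apply: (mulgI (iota 0%R)); rewrite -iotaD addr0 mulg1. Qed.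

Definition iota_inv (g : G) : A := epsilon (inhabits 0%R) (fun a => iota a = g).

Lemma iota_invK g : pi g = 1 -> iota (iota_inv g) = g.
Proof. by move/pi_eq1/in_center_iotaP; apply: epsilon_spec. Qed.

Lemma iotaK : cancel iota iota_inv.
Proof. by move=> a; apply: iota_inj; rewrite iota_invK ?pi_iota. Qed.

Definition section (h : H) : G := epsilon (inhabits 1) (fun g => pi g = h).

Lemma sectionK : cancel section pi.
Proof. by move=> h; apply: epsilon_spec (pi_surj h). Qed.

Lemma ext_cocycle_exists : exists sigma, ext_cocycle iota pi sigma.
Proof.
exists (fun h1 h2 => iota_inv ((section (h1 * h2))^-1 * (section h1 * section h2))).
exists section; split=> [|h1 h2 /=]; first exact: sectionK.
apply: iota_invK.
by rewrite !pi_hom (grp_homV pi_hom) !sectionK mulVg.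
Qed.

Section Coordinates.
Variable s : H -> G.
Hypothesis sK : cancel s pi.

Definition coord_elt (h : H) (a : A) : G := s h * iota a.
Definition coordA (g : G) : A := iota_inv ((s (pi g))^-1 * g).

Lemma pi_coord_elt h a : pi (coord_elt h a) = h.
Proof. by rewrite pi_hom pi_iota mulg1 sK. Qed.

Lemma coordA_coord_elt h a : coordA (coord_elt h a) = a.
Proof. by rewrite /coordA pi_coord_elt mulKg iotaK. Qed.

Lemma coord_eltK g : coord_elt (pi g) (coordA g) = g.
Proof.
by rewrite /coord_elt /coordA iota_invK ?mulVKg // pi_hom (grp_homV pi_hom) sK mulVg.
Qed.

Lemma coord_elt_inj h a k b : coord_elt h a = coord_elt k b -> h = k /\ a = b.
Proof.
move=> e; split; first by rewrite -(pi_coord_elt h a) e pi_coord_elt.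
by rewrite -(coordA_coord_elt h a) e coordA_coord_elt.
Qed.

Lemma section_coord_elt h : s h = coord_elt h 0%R.
Proof. by rewrite /coord_elt iota0 mulg1. Qed.

Lemma coord_elt_iota h a b : coord_elt h a * iota b = coord_elt h (a + b)%R.
Proof. by rewrite /coord_elt iotaD mulgA. Qed.

Variable sigma : H -> H -> A.
Hypothesis s_cocycle : forall h1 h2, iota (sigma h1 h2) = (s (h1 * h2))^-1 * (s h1 * s h2).

Lemma coord_eltM h a k b :
  coord_elt h a * coord_elt k b = coord_elt (h * k) (sigma h k + a + b)%R.
Proof.
rewrite /coord_elt mulgA -(mulgA (s h)) (iota_central a (s k)) mulgA.
by rewrite -{1}(mulVKg (s (h * k)) (s h * s k)) -s_cocycle -!mulgA -!iotaD addrA.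
Qed.

Lemma ext_cocycle_cocycle2 : cocycle2 sigma.
Proof.
move=> h1 h2 h3; have := mulgA (s h1) (s h2) (s h3).
rewrite !section_coord_elt !coord_eltM => /coord_elt_inj[_].
by rewrite !addr0 addrC => ->; rewrite addrC.
Qed.

Lemma ext_cocycle_nondegenerate : centrally_nondegenerate sigma.
Proof.
move=> g gZ g_neq1; apply: NNPP => sigma_sym; apply: g_neq1.
have {}sigma_sym h : sigma g h = sigma h g.
  by apply: NNPP => neq; apply: sigma_sym; exists h.
rewrite -(sK g); apply/pi_eq1 => x.
by rewrite -(coord_eltK x) section_coord_elt !coord_eltM sigma_sym (gZ (pi x)) !addr0.
Qed.

End Coordinates.

Lemma ext_cocycle_class sigma tau :
  ext_cocycle iota pi sigma -> ext_cocycle iota pi tau <-> cohomologous sigma tau.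
Proof.
case=> s [sK s_cocycle]; split.
  case=> t [tK t_cocycle]; pose c h := coordA s (t h).
  have tE h : t h = coord_elt s h (c h) by rewrite -{1}(coord_eltK sK (t h)) tK.
  exists c => h1 h2.
  have := mulVKg (t (h1 * h2)) (t h1 * t h2); rewrite -t_cocycle.
  rewrite !tE coord_elt_iota (coord_eltM s_cocycle) => /(coord_elt_inj sK)[_ e].
  by rewrite -[tau _ _](addKr (c (h1 * h2))) e addrC !addrA.
case=> c tauE; exists (fun h => coord_elt s h (c h)); split=> [h | h1 h2].
  exact: pi_coord_elt.
apply: (mulgI (coord_elt s (h1 * h2) (c (h1 * h2)))).
rewrite mulVKg coord_elt_iota (coord_eltM s_cocycle) tauE; congr (coord_elt _ _ _).
by rewrite addrC addrA subrK addrA.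
Qed.

End CentralExtension.

Lemma ext_cocycle_transport (H : groupType) (A : zmodType)
    (G1 : groupType) (iota1 : A -> G1) (pi1 : G1 -> H)
    (G2 : groupType) (iota2 : A -> G2) (pi2 : G2 -> H)
    (f : G1 -> G2) (psiH phi : H -> H) (psiA : A -> A) (sigma : H -> H -> A) :
  grp_hom f -> grp_hom psiH -> cancel psiH phi ->
  (forall a, f (iota1 a) = iota2 (psiA a)) -> (forall g, pi2 (f g) = phi (pi1 g)) ->
  ext_cocycle iota1 pi1 sigma -> ext_cocycle iota2 pi2 (aut_act psiH psiA sigma).
Proof.
move=> fM psiHM psiHK f_iota f_pi [s [sK s_cocycle]].
exists (fun h => f (s (psiH h))); split=> [h | h1 h2]; first by rewrite f_pi sK psiHK.
by rewrite /aut_act -f_iota s_cocycle psiHM !fM (grp_homV fM).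
Qed.

Section InducedMaps.
Variables (H : groupType) (A : zmodType).
Variables (G1 : groupType) (iota1 : A -> G1) (pi1 : G1 -> H).
Variables (G2 : groupType) (iota2 : A -> G2) (pi2 : G2 -> H).
Hypotheses (ext1 : center_data iota1 pi1) (ext2 : center_data iota2 pi2).
Variables (f : G1 -> G2) (f' : G2 -> G1).
Hypotheses (fM : grp_hom f) (f'K : cancel f' f).

Definition center_map (a : A) : A := iota_inv iota2 (f (iota1 a)).
Definition quotient_map (h : H) : H := pi2 (f (section pi1 h)).

Lemma center_mapE a : f (iota1 a) = iota2 (center_map a).
Proof.
rewrite (iota_invK ext2) // (pi_eq1 ext2).
exact: grp_hom_center fM f'K (iota_central ext1 a).
Qed.

Lemma center_map_additive : {morph center_map : a b / (a + b)%R}.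
Proof.
move=> a b; apply: (iota_inj ext2).
by rewrite (iotaD ext2) -!center_mapE (iotaD ext1) fM.
Qed.

Lemma quotient_mapE g : pi2 (f g) = quotient_map (pi1 g).
Proof.
set x := section pi1 (pi1 g); have ker_xg : pi2 (f (x^-1 * g)) = 1.
  apply/(pi_eq1 ext2)/(grp_hom_center fM f'K)/(pi_eq1 ext1).
  by rewrite (pi_hom ext1) (grp_homV (pi_hom ext1)) (sectionK ext1) mulVg.
by rewrite /quotient_map -/x -{1}(mulVKg x g) fM (pi_hom ext2) ker_xg mulg1.
Qed.

Lemma quotient_map_hom : grp_hom quotient_map.
Proof.
move=> h k; rewrite -(sectionK ext1 h) -(sectionK ext1 k) -(pi_hom ext1).
by rewrite -!quotient_mapE fM (pi_hom ext2).
Qed.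

End InducedMaps.

Section Isomorphisms.
Variables (H : groupType) (A : zmodType).
Variables (G1 : groupType) (iota1 : A -> G1) (pi1 : G1 -> H).
Variables (G2 : groupType) (iota2 : A -> G2) (pi2 : G2 -> H).
Hypotheses (ext1 : center_data iota1 pi1) (ext2 : center_data iota2 pi2).

Lemma ext_cocycle_isomorphic (sigma1 sigma2 : H -> H -> A) (phi : H -> H) (psiA : A -> A) :
  ext_cocycle iota1 pi1 sigma1 -> ext_cocycle iota2 pi2 sigma2 ->
  grp_aut phi -> zmod_aut psiA ->
  (forall h k, sigma2 (phi h) (phi k) = psiA (sigma1 h k)) -> grp_isomorphic G1 G2.
Proof.
move=> [s1 [s1K s1_cocycle]] [s2 [s2K s2_cocycle]].
move=> [phiM [phi' phiK phi'K]] [psiAD [psiA' psiAK psiA'K]] sigma_compat.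
pose F g := coord_elt iota2 s2 (phi (pi1 g)) (psiA (coordA iota1 pi1 s1 g)).
pose F' g := coord_elt iota1 s1 (phi' (pi2 g)) (psiA' (coordA iota2 pi2 s2 g)).
exists F; split; last exists F'.
- move=> x y; rewrite -(coord_eltK ext1 s1K x) -(coord_eltK ext1 s1K y).
  rewrite (coord_eltM ext1 s1_cocycle) /F !(pi_coord_elt ext1 s1K) !(coordA_coord_elt ext1 s1K).
  by rewrite (coord_eltM ext2 s2_cocycle) phiM sigma_compat !psiAD.
- move=> g; rewrite /F' /F (pi_coord_elt ext2 s2K) (coordA_coord_elt ext2 s2K).
  by rewrite phiK psiAK coord_eltK.
- move=> g; rewrite /F /F' (pi_coord_elt ext1 s1K) (coordA_coord_elt ext1 s1K).
  by rewrite phi'K psiA'K coord_eltK.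
Qed.

Lemma isomorphic_same_orbit (sigma1 sigma2 : H -> H -> A) :
  ext_cocycle iota1 pi1 sigma1 -> ext_cocycle iota2 pi2 sigma2 ->
  grp_isomorphic G1 G2 -> same_orbit sigma1 sigma2.
Proof.
move=> ext_sigma1 ext_sigma2 [f [fM [f' fK f'K]]]; have f'M := grp_hom_can fM fK f'K.
set psiA := center_map iota1 iota2 f; set psiA' := center_map iota2 iota1 f'.
set phi := quotient_map pi1 pi2 f; set psiH := quotient_map pi2 pi1 f'.
have iotaE a : f (iota1 a) = iota2 (psiA a) := center_mapE ext1 ext2 fM f'K a.
have iotaE' a : f' (iota2 a) = iota1 (psiA' a) := center_mapE ext2 ext1 f'M fK a.
have piE g : pi2 (f g) = phi (pi1 g) := quotient_mapE ext1 ext2 fM f'K g.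
have piE' g : pi1 (f' g) = psiH (pi2 g) := quotient_mapE ext2 ext1 f'M fK g.
have psiAK : cancel psiA psiA'.
  by move=> a; apply: (iota_inj ext1); rewrite -iotaE' -iotaE fK.
have psiA'K : cancel psiA' psiA.
  by move=> a; apply: (iota_inj ext2); rewrite -iotaE -iotaE' f'K.
have psiHK : cancel psiH phi by move=> h; rewrite -(sectionK ext2 h) -piE' -piE f'K.
have phiK : cancel phi psiH by move=> h; rewrite -(sectionK ext1 h) -piE -piE' fK.
have psiHM : grp_hom psiH := quotient_map_hom ext2 ext1 f'M fK.
have ext_aut := ext_cocycle_transport fM psiHM psiHK iotaE piE ext_sigma1.
have psiAD : {morph psiA : a b / (a + b)%R} := center_map_additive ext1 ext2 fM f'K.
exists psiH, psiA; split; first by split; last exact: Bijective psiHK phiK.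
  by split; last exact: Bijective psiAK psiA'K.
exact: (ext_cocycle_class ext2 sigma2 ext_aut).1 ext_sigma2.
Qed.

Lemma same_orbit_isomorphic (sigma1 sigma2 : H -> H -> A) :
  ext_cocycle iota1 pi1 sigma1 -> ext_cocycle iota2 pi2 sigma2 ->
  same_orbit sigma1 sigma2 -> grp_isomorphic G1 G2.
Proof.
move=> ext_sigma1 ext_sigma2 [psiH [psiA [[psiHM [phi psiHK phiK]] psiA_aut coh]]].
have ext_aut : ext_cocycle iota2 pi2 (aut_act psiH psiA sigma1).
  by apply/(ext_cocycle_class ext2 _ ext_sigma2)/cohomologous_sym.
apply: (ext_cocycle_isomorphic (phi := phi) ext_sigma1 ext_aut _ psiA_aut).
  by split; [exact: grp_hom_can psiHM psiHK phiK | exact: Bijective phiK psiHK].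
by move=> h k; rewrite /aut_act !phiK.
Qed.

End Isomorphisms.

Section CocycleExtension.
Variables (H : groupType) (A : zmodType) (sigma : H -> H -> A).
Hypothesis sigma_cocycle : cocycle2 sigma.

Lemma cocycle1g k : sigma 1 k = sigma 1 1.
Proof.
have := sigma_cocycle 1 1 k; rewrite !mul1g => e.
by apply: (addIr (sigma 1 k)); rewrite e.
Qed.

Lemma cocycleg1 h : sigma h 1 = sigma 1 1.
Proof.
have := sigma_cocycle h 1 1; rewrite !mulg1 => e.
by apply: (addIr (sigma h 1)); rewrite e addrC.
Qed.

Lemma cocycleVg h : sigma h^-1 h = sigma h h^-1.
Proof.
have := sigma_cocycle h h^-1 h; rewrite mulgV mulVg cocycle1g cocycleg1 => e.
by apply: (addIr (sigma 1 1)); rewrite e.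
Qed.

(* The pair (a, h) stands for s(h) iota(a).  The carrier mentions [sigma_cocycle]
   only so that the group instance below, which needs it, can be keyed on it. *)
Definition cocycle_carrier of cocycle2 sigma := (A * H)%type.
Local Notation T := (cocycle_carrier sigma_cocycle).
HB.instance Definition _ := Choice.on T.

Definition cocycle_one : T := ((- sigma 1 1)%R, 1).
Definition cocycle_mul (x y : T) : T := ((x.1 + y.1 + sigma x.2 y.2)%R, x.2 * y.2).
Definition cocycle_inv (x : T) : T := ((- sigma 1 1 - x.1 - sigma x.2^-1 x.2)%R, x.2^-1).

Lemma cocycle_mulA : associative cocycle_mul.
Proof.
move=> [a h] [b k] [c l]; congr pair; rewrite /= ?mulgA //.
by rewrite !addrA [RHS](ACl (1*2*4*(3*5))) [LHS](ACl (1*2*3*(4*5))) /= sigma_cocycle.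
Qed.

Lemma cocycle_mul1 : left_id cocycle_one cocycle_mul.
Proof.
move=> [b k]; congr pair; rewrite /= ?mul1g //.
by rewrite cocycle1g addrC addrA addrN add0r.
Qed.

Lemma cocycle_mulg1 : right_id cocycle_one cocycle_mul.
Proof. by move=> [b k]; congr pair; rewrite /= ?mulg1 // cocycleg1 subrK. Qed.

Lemma cocycle_mulV : left_inverse cocycle_one cocycle_inv cocycle_mul.
Proof.
move=> [a h]; congr pair; rewrite /= ?mulVg //.
by rewrite [LHS](ACl (1*(2*4)*(3*5))) /= !addNr !addr0.
Qed.

Lemma cocycle_mulgV : right_inverse cocycle_one cocycle_inv cocycle_mul.
Proof.
move=> [a h]; congr pair; rewrite /= ?mulgV //.
by rewrite cocycleVg !addrA [LHS](ACl (2*(1*3)*(4*5))) /= addrN addNr !addr0.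
Qed.

HB.instance Definition _ :=
  isGroup.Build T cocycle_mulA cocycle_mul1 cocycle_mulg1 cocycle_mulV cocycle_mulgV.

Definition cocycle_group : groupType := T.

Lemma cocycle_groupM (x y : cocycle_group) :
  x * y = ((x.1 + y.1 + sigma x.2 y.2)%R, x.2 * y.2).
Proof. by []. Qed.

Definition cocycle_iota (a : A) : cocycle_group := ((a - sigma 1 1)%R, 1).
Definition cocycle_pi (x : cocycle_group) : H := x.2.

Lemma cocycle_iota_central a : in_center (cocycle_iota a).
Proof.
move=> [b k]; rewrite !cocycle_groupM /= cocycle1g cocycleg1 mul1g mulg1.
by rewrite (addrC (a - _)%R b).
Qed.

Hypothesis sigma_nondegenerate : centrally_nondegenerate sigma.

Lemma cocycle_group_centerP (g : cocycle_group) :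
  in_center g <-> exists a, cocycle_iota a = g.
Proof.
split=> [|[a <-]]; last exact: cocycle_iota_central.
case: g => a h gZ; exists (a + sigma 1 1)%R; rewrite /cocycle_iota addrK.
have {}gZ k : h * k = k * h /\ sigma h k = sigma k h.
  have := gZ (0%R, k); rewrite !cocycle_groupM /= addr0 add0r.
  by case=> e1 e2; split=> //; apply: (addrI a).
case: (classic (h = 1)) => [-> // | h_neq1].
by have [k] := sigma_nondegenerate (fun k => (gZ k).1) h_neq1; rewrite (gZ k).2.
Qed.

Lemma cocycle_group_center_data : center_data cocycle_iota cocycle_pi.
Proof.
split; split.
- move=> a b; rewrite cocycle_groupM /= mulg1; congr pair.
  by rewrite !addrA subrK addrAC.
- by move=> a b [] /addIr.
- exact: cocycle_group_centerP.
- by [].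
- by move=> h; exists (0%R, h).
- move=> [a h]; rewrite /cocycle_pi /=; split=> [-> | /cocycle_group_centerP[b [_ <-]] //].
  by apply/cocycle_group_centerP; exists (a + sigma 1 1)%R; rewrite /cocycle_iota addrK.
Qed.

Lemma cocycle_group_ext_cocycle : ext_cocycle cocycle_iota cocycle_pi sigma.
Proof.
exists (fun h => (0%R, h) : cocycle_group); split=> // h1 h2.
apply: (mulgI ((0%R, h1 * h2) : cocycle_group)).
by rewrite mulVKg !cocycle_groupM /= cocycleg1 mulg1 !add0r subrK.
Qed.

End CocycleExtension.

Theorem theorem2p8 (H : groupType) (A : zmodType) :
  (* the map is defined: every such G carries an extension cocycle *)
  (forall (G : groupType) (iota : A -> G) (pi : G -> H),
      center_data iota pi -> exists sigma, ext_cocycle iota pi sigma) /\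
  (* it lands in classes of centrally non-degenerate cocycles *)
  (forall (G : groupType) (iota : A -> G) (pi : G -> H) (sigma : H -> H -> A),
      center_data iota pi -> ext_cocycle iota pi sigma ->
      cocycle2 sigma /\ centrally_nondegenerate sigma) /\
  (* well-defined on isomorphism classes and injective *)
  (forall (G1 : groupType) (iota1 : A -> G1) (pi1 : G1 -> H) (sigma1 : H -> H -> A)
          (G2 : groupType) (iota2 : A -> G2) (pi2 : G2 -> H) (sigma2 : H -> H -> A),
      center_data iota1 pi1 -> ext_cocycle iota1 pi1 sigma1 ->
      center_data iota2 pi2 -> ext_cocycle iota2 pi2 sigma2 ->
      (grp_isomorphic G1 G2 <-> same_orbit sigma1 sigma2)) /\
  (* surjective *)
  (forall sigma : H -> H -> A,
      cocycle2 sigma -> centrally_nondegenerate sigma ->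
      exists (G : groupType) (iota : A -> G) (pi : G -> H),
        center_data iota pi /\ ext_cocycle iota pi sigma).
Proof.
split; first exact: ext_cocycle_exists.
split.
  move=> G iota pi sigma ext [s [sK s_cocycle]].
  split; first exact: (ext_cocycle_cocycle2 ext sK s_cocycle).
  exact: (ext_cocycle_nondegenerate ext sK s_cocycle).
split.
  move=> G1 iota1 pi1 sigma1 G2 iota2 pi2 sigma2 ext1 ext_sigma1 ext2 ext_sigma2.
  split; first exact: (isomorphic_same_orbit ext1 ext2 ext_sigma1 ext_sigma2).
  exact: (same_orbit_isomorphic ext1 ext2 ext_sigma1 ext_sigma2).
move=> sigma sigma_cocycle sigma_nondegenerate.
exists (cocycle_group sigma_cocycle), (cocycle_iota sigma_cocycle).
exists (cocycle_pi (sigma_cocycle := sigma_cocycle)).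
split; first exact: cocycle_group_center_data.
exact: cocycle_group_ext_cocycle.
Qed.
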